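(* Let $r\le n$, let $\beta:[r]\to[2n]$ be injective, and let $A\in\mathrm{Sp}_{2n}$ satisfy $Ae_{2n,\beta(i)}=e_{2n,i}$ and $e_{2n,i}^{\top}A=e_{2n,\beta(i)}^{\top}$ for all $i\in[r]$. Then $\beta$ is qubit-injective, and for all $i\in[r]$: $Ae_{2n,2n+1-\beta(i)}=e_{2n,2n+1-i}$ and $e_{2n,2n+1-i}^{\top}A=e_{2n,2n+1-\beta(i)}^{\top}$.
   Context: $\mathbb{F}$ is the field with two elements, $[N]=\{1,\dots,N\}$, $e_{2n,i}$ standard basis column vectors of $\mathbb{F}^{2n}$. $R_{2n}=\sum_{i=1}^{2n}e_{2n,i}e_{2n,2n+1-i}^{\top}$; $\mathrm{Sp}_{2n}=\{C\in\mathbb{F}^{2n\times2n}:C^{\top}R_{2n}C=R_{2n}\}$. $Q_n(i)=\min(i,2n+1-i)$; $\beta$ is qubit-injective if $Q_n\circ\beta$ is injective. *)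

From mathcomp Require Import all_boot all_algebra.
Set Implicit Arguments. Unset Strict Implicit. Unset Printing Implicit Defensive.
Import GRing.Theory.
Local Open Scope ring_scope.

(* Indices [N] = {1..N} are represented 0-based by 'I_N: the paper's index k
   corresponds to the ordinal k-1.  Then 2n+1-k corresponds to rev_ord. *)

Notation F2 := 'F_2.

Definition ebasis (N : nat) (i : 'I_N) : 'cV[F2]_N := delta_mx i 0.

Definition Rmx (n : nat) : 'M[F2]_(n + n) :=
  \sum_(i < n + n) ebasis i *m (ebasis (rev_ord i))^T.

Definition symplectic (n : nat) (C : 'M[F2]_(n + n)) : Prop :=
  C^T *m Rmx n *m C = Rmx n.

(* Q_n(i) = min(i, 2n+1-i) (1-based); for the ordinal k (paper index k+1)
   this is min(k+1, 2n-k). *)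
Definition Qn (n : nat) (k : 'I_(n + n)) : nat := minn k.+1 (n + n - k).

Definition qubit_injective (r n : nat) (beta : 'I_r -> 'I_(n + n)) : Prop :=
  injective (fun i => Qn (beta i)).

Definition emb (r n : nat) (h : (r <= n)%N) (i : 'I_r) : 'I_(n + n) :=
  widen_ord (leq_trans h (leq_addr n n)) i.

From mathcomp Require Import all_boot all_algebra.
From mathcomp Require Import zify.
Set Implicit Arguments. Unset Strict Implicit. Unset Printing Implicit Defensive.
Local Open Scope ring_scope.
Import GRing.Theory.

(* R is the involutive permutation matrix of i |-> 2n+1-i, so C^T R C = R
   makes A invertible with inverse R A^T R, whence also A R A^T = R.  Thus
   e_i^T A = e_{beta i}^T gives A e_{2n+1-beta i} = A R A^T e_i = R e_i =
   e_{2n+1-i}, and dually for rows.  If Q(beta i) = Q(beta j) with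
   beta i <> beta j, then beta i = 2n+1-beta j, and the column identity for j
   would map e_{beta i} both to e_i and to e_{2n+1-j}; but i <= r <= n < 2n+1-j. *)

Lemma RmxE n (a b : 'I_(n + n)) : Rmx n a b = (b == rev_ord a)%:R.
Proof.
rewrite /Rmx summxE (bigD1 a) //= big1 => [|i ia];
  rewrite /ebasis trmx_delta mul_delta_mx mxE.
  by rewrite eqxx addr0.
by rewrite eq_sym (negbTE ia).
Qed.

Lemma mul_Rmx n p (M : 'M[F2]_(n + n, p)) : Rmx n *m M = rowsub (@rev_ord _) M.
Proof.
apply/matrixP => a b; rewrite !mxE (bigD1 (rev_ord a)) //= big1 => [|i ia].
  by rewrite RmxE eqxx mul1r addr0.
by rewrite RmxE (negbTE ia) mul0r.
Qed.

Lemma Rmx_ebasis n (j : 'I_(n + n)) : Rmx n *m ebasis j = ebasis (rev_ord j).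
Proof.
apply/matrixP => a b; rewrite mul_Rmx /ebasis !mxE.
by rewrite -(inj_eq rev_ord_inj) rev_ordK.
Qed.

Lemma Rmx_sq n : Rmx n *m Rmx n = 1%:M.
Proof.
apply/matrixP => a b; rewrite mul_Rmx -[Rmx n]mulmx1 mul_Rmx !mxE.
by rewrite rev_ordK.
Qed.

Lemma ebasis_inj N : injective (@ebasis N).
Proof.
move=> i j /matrixP /(_ i 0); rewrite /ebasis !mxE eqxx /=.
by case: eqP.
Qed.

Lemma symplectic_tr n (A : 'M[F2]_(n + n)) : symplectic A -> symplectic A^T.
Proof.
rewrite /symplectic trmxK => hA.
have /mulmx1C AR : (Rmx n *m A^T *m Rmx n) *m A = 1%:M.
  by rewrite -!mulmxA (mulmxA A^T) hA Rmx_sq.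
have -> : A *m Rmx n *m A^T = A *m (Rmx n *m A^T *m Rmx n) *m Rmx n.
  by rewrite !mulmxA -[RHS]mulmxA Rmx_sq mulmx1.
by rewrite AR mul1mx.
Qed.

Lemma symplectic_mul_ebasis_rev n (A : 'M[F2]_(n + n)) (j k : 'I_(n + n)) :
  symplectic A -> (ebasis j)^T *m A = (ebasis k)^T ->
  A *m ebasis (rev_ord k) = ebasis (rev_ord j).
Proof.
move=> /symplectic_tr; rewrite /symplectic trmxK => hA /(congr1 trmx).
rewrite trmx_mul !trmxK => hk.
by rewrite -!Rmx_ebasis -hk !mulmxA hA.
Qed.

Lemma symplectic_ebasis_rev_mul n (A : 'M[F2]_(n + n)) (j k : 'I_(n + n)) :
  symplectic A -> A *m ebasis k = ebasis j ->
  (ebasis (rev_ord j))^T *m A = (ebasis (rev_ord k))^T.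
Proof.
move=> /symplectic_tr hA hk.
have hkT : (ebasis k)^T *m A^T = (ebasis j)^T by rewrite -trmx_mul hk.
by rewrite -[A]trmxK -trmx_mul (symplectic_mul_ebasis_rev hA hkT).
Qed.

Lemma Qn_eq n (a b : 'I_(n + n)) : Qn a = Qn b -> a = b \/ a = rev_ord b.
Proof.
rewrite /Qn => hab; have ha := ltn_ord a; have hb := ltn_ord b.
have [ab|ab] : (nat_of_ord a = b \/ nat_of_ord a = n + n - b.+1)%N by lia.
  by left; apply: val_inj.
by right; apply: val_inj.
Qed.

Lemma emb_neq_rev r n (hrn : (r <= n)%N) (i j : 'I_r) :
  emb hrn i != rev_ord (emb hrn j).
Proof.
apply/eqP => /(congr1 val) /=; have := ltn_ord i; have := ltn_ord j; lia.
Qed.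

Theorem lemma10 (r n : nat) (hrn : (r <= n)%N) (beta : 'I_r -> 'I_(n + n))
  (A : 'M[F2]_(n + n)) :
  injective beta ->
  symplectic A ->
  (forall i : 'I_r, A *m ebasis (beta i) = ebasis (emb hrn i)) ->
  (forall i : 'I_r, (ebasis (emb hrn i))^T *m A = (ebasis (beta i))^T) ->
  qubit_injective beta /\
  (forall i : 'I_r,
     A *m ebasis (rev_ord (beta i)) = ebasis (rev_ord (emb hrn i)) /\
     (ebasis (rev_ord (emb hrn i)))^T *m A = (ebasis (rev_ord (beta i)))^T).
Proof.
move=> beta_inj hA hcol hrow.
have hcol_rev i := symplectic_mul_ebasis_rev hA (hrow i).
split=> [i j /Qn_eq [/beta_inj // | bij] | i].
  have := hcol_rev j; rewrite -bij hcol => /ebasis_inj eij.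
  by have := emb_neq_rev hrn i j; rewrite eij eqxx.
by split; [exact: hcol_rev | exact: symplectic_ebasis_rev_mul hA (hcol i)].
Qed.
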